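(* Let $n\ge 2$ be an integer and $m=\min\{k\in\mathbb{N}: n\le\tfrac12(k^3-k^2)\}$. Then $\chi_{L_2}(P_n)=m$. Moreover, for the path $P_n=v_1v_2\cdots v_n$ there exists a neighbor locating coloring $f_n:V(P_n)\to[m]$ (onto) such that $f_n(v_{n-1})=2$ and $f_n(v_n)=1$; furthermore, if $n\ge 9$ then also $f_n(v_{n-2})=m$, and if $n\ge 9$ and $n\ne\tfrac12(m^3-m^2)-1$ then also $f_n(v_1)=2$ and $f_n(v_2)=1$.
   Context: All graphs are finite and simple; $P_n=v_1v_2\cdots v_n$ is the path with edges $v_iv_{i+1}$, $1\le i<n$. A proper $k$-coloring of $G$ is a map $f$ from $V(G)$ onto $[k]=\{1,\dots,k\}$ with adjacent vertices receiving different colors; $f(S)=\{f(u):u\in S\}$ and $N_G(u)$ is the neighborhood of $u$. A proper $k$-coloring $f$ is a neighbor locating coloring if for any two distinct vertices $u,v$ with $f(u)=f(v)$ we have $f(N_G(u))\ne f(N_G(v))$; $\chi_{L_2}(G)$ is the minimum number of colors in a neighbor locating coloring of $G$. *)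

From mathcomp Require Import all_boot.
Set Implicit Arguments. Unset Strict Implicit. Unset Printing Implicit Defensive.

(* Path P_n on vertex set 'I_n: vertex i : 'I_n stands for v_(i+1);
   edges v_i v_(i+1). *)
Definition path_rel (n : nat) : rel 'I_n :=
  fun i j => (i.+1 == j :> nat) || (j.+1 == i :> nat).

(* f(N_G(u)) as a sequence; compared as sets via =i *)
Definition nbcols (T : finType) (e : rel T) (f : T -> nat) (u : T) : seq nat :=
  [seq f w | w <- enum T & e u w].

Definition onto_colors (T : finType) (k : nat) (f : T -> nat) : Prop :=
  (forall x, 1 <= f x <= k) /\ (forall c, 1 <= c <= k -> exists x, f x = c).

Definition proper_coloring (T : finType) (e : rel T) (k : nat) (f : T -> nat) : Prop :=
  onto_colors k f /\ (forall u v, e u v -> f u <> f v).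

Definition nl_coloring (T : finType) (e : rel T) (k : nat) (f : T -> nat) : Prop :=
  proper_coloring e k f /\
  (forall u v, u <> v -> f u = f v -> ~ (nbcols e f u =i nbcols e f v)).

Definition is_chiL2 (T : finType) (e : rel T) (m : nat) : Prop :=
  (exists f, nl_coloring e m f) /\ (forall k f, nl_coloring e k f -> m <= k).

From mathcomp Require Import all_boot zify.
Set Implicit Arguments. Unset Strict Implicit. Unset Printing Implicit Defensive.

(* A neighbor locating colouring of the path with [k] colours gives distinct vertices
   distinct keys: the colour of the vertex together with the multiset of the colours of
   its neighbours, an end vertex counting its only neighbour twice.  There are only
   [k * 'C(k, 2) = (k^3 - k^2) / 2] possible keys, whence the lower bound.

   Conversely, colour sequences are built level by level.  A sequence for [k] colours
   ending in [2, 1] is continued by a walk that stays at the new colour [x = k + 1]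
   except for short excursions [x, o, x] through old colours ([o = [c]] or
   [o = [y; a]]) and finally returns with [2, 1].  All new keys contain [x], except the
   end key [(1, {2})] which replaces the old one, so keys stay distinct.  The number of
   excursions, together with a suitable cut of the previous level, realises every
   length between two consecutive capacities; levels up to 4 are checked by
   computation. *)

Definition nkey (a b c : nat) : nat * nat * nat := (b, minn a c, maxn a c).

Fixpoint inner_keys (l : seq nat) : seq (nat * nat * nat) :=
  if l is a :: ((b :: c :: _) as t) then nkey a b c :: inner_keys t else [::].

Lemma inner_keys_cons a t : 1 < size t ->
  inner_keys (a :: t) = nkey a (nth 0 t 0) (nth 0 t 1) :: inner_keys t.
Proof. by case: t => [|b [|c t]]. Qed.

Lemma size_inner_keys l : size (inner_keys l) = (size l).-2.
Proof.
elim: l => [|a t IH] //; case: t IH => [|b [|c t]] IH //.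
by rewrite inner_keys_cons //= IH.
Qed.

Lemma nth_inner_keys l i : i.+2 < size l ->
  nth (0, 0, 0) (inner_keys l) i = nkey (nth 0 l i) (nth 0 l i.+1) (nth 0 l i.+2).
Proof.
elim: l i => [|a t IH] [|i] //; case: t IH => [|b [|c t]] IH //= lt_i.
by rewrite IH.
Qed.

Lemma inner_keys_cat l1 a b l2 :
  inner_keys (l1 ++ a :: b :: l2) = inner_keys (l1 ++ [:: a; b]) ++ inner_keys (a :: b :: l2).
Proof.
elim: l1 => [|c l1 IH] //.
rewrite !cat_cons inner_keys_cons ?size_cat ?addnS // [inner_keys (c :: _)]inner_keys_cons
  ?size_cat ?addnS // IH /= !nth_cat.
by case: l1 {IH} => [|d [|e l1]].
Qed.

Lemma mem_inner_keys l k : k \in inner_keys l -> [/\ k.1.1 \in l, k.1.2 \in l & k.2 \in l].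
Proof.
elim: l => [|a t IH] //; case: t IH => [|b [|c t]] IH //.
rewrite inner_keys_cons //= inE => /orP [/eqP -> /= | /IH [k1 k2 k3]].
  by rewrite /minn /maxn; split; rewrite ?inE ?eqxx ?orbT //; case: ifP; rewrite ?eqxx ?orbT.
by split; rewrite inE ?k1 ?k2 ?k3 orbT.
Qed.

(* An end vertex sees a single neighbour; padding each end of the sequence with a
   copy of that neighbour gives it the key (c, a, a), whose colour set is still {a}. *)
Definition pad (s : seq nat) := nth 0 s 1 :: s ++ [:: nth 0 s (size s).-2].
Definition path_keys (s : seq nat) := inner_keys (pad s).

Definition left_col (s : seq nat) u := if u == 0 then nth 0 s 1 else nth 0 s u.-1.
Definition right_col (s : seq nat) u :=
  if u.+1 < size s then nth 0 s u.+1 else nth 0 s (size s).-2.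

Lemma size_path_keys s : size (path_keys s) = size s.
Proof. by rewrite /path_keys size_inner_keys /pad /= size_cat addn1. Qed.

Lemma nth_path_keys s u : 1 < size s -> u < size s ->
  nth (0, 0, 0) (path_keys s) u = nkey (left_col s u) (nth 0 s u) (right_col s u).
Proof.
move=> s_gt1 lt_u; rewrite /path_keys nth_inner_keys; last by rewrite /pad /= size_cat /=; lia.
have pad_mid i : i < size s -> nth 0 (pad s) i.+1 = nth 0 s i.
  by move=> lt_i; rewrite /pad /= nth_cat lt_i.
have -> : nth 0 (pad s) u = left_col s u.
  by rewrite /left_col; case: u lt_u => [|u'] lt_u' //=; rewrite nth_cat ifT //; lia.
rewrite pad_mid // /right_col; congr nkey; case: ifP => [/pad_mid //| ge_s].
have -> : u.+1 = size s by lia.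
by rewrite /pad /= nth_cat ltnn subnn.
Qed.

Lemma eq_pair_mem a b c d :
  (forall z, ((z == a) || (z == b)) = ((z == c) || (z == d))) <->
  minn a b = minn c d /\ maxn a b = maxn c d.
Proof.
split => [E | [Emin Emax] z]; last by apply/idP/idP; lia.
by move: (E a) (E b) (E c) (E d); rewrite !eqxx ?orbT /=; lia.
Qed.

Lemma mem_nbcols_path n (f : 'I_n -> nat) s (u : 'I_n) c :
  size s = n -> 1 < n -> (forall i, f i = nth 0 s i) ->
  (c \in nbcols (@path_rel n) f u) = (c == left_col s u) || (c == right_col s u).
Proof.
move=> size_s n_gt1 Ef; have lt_u := ltn_ord u.
rewrite /nbcols /left_col /right_col size_s; apply/mapP/idP.
  case=> w; rewrite mem_filter mem_enum andbT /path_rel Ef => /orP [] /eqP E ->.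
    by rewrite -E; move: (ltn_ord w); rewrite -E => ->; apply/orP; right.
  by case: (nat_of_ord u) E => [|u'] //= [->]; apply/orP; left.
have nb_col k (lt_k : k < n) : path_rel u (Ordinal lt_k) ->
    exists2 w, w \in [seq x <- enum 'I_n | path_rel u x] & nth 0 s k = f w.
  by move=> u_k; exists (Ordinal lt_k); [rewrite mem_filter mem_enum andbT | rewrite Ef].
case: ifP => [/eqP u0 | u_gt0] /=.
  by rewrite u0 n_gt1 orbb => /eqP ->; apply: (nb_col 1 n_gt1); rewrite /path_rel u0.
have lt_p : u.-1 < n by lia.
case/orP => [/eqP -> | ].
  by apply: (nb_col _ lt_p); rewrite /path_rel /=; lia.
case: ifP => lt_s /eqP ->.
  by apply: (nb_col _ lt_s); rewrite /path_rel /= eqxx.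
have lt_e : n.-2 < n by lia.
by apply: (nb_col _ lt_e); rewrite /path_rel /=; lia.
Qed.

Definition proper_key (k : nat * nat * nat) := (k.1.1 != k.1.2) && (k.1.1 != k.2).

Definition nl_seq (m : nat) (s : seq nat) : bool :=
  [&& 1 < size s, uniq (path_keys s), all proper_key (path_keys s),
      all (fun c => 0 < c <= m) s & all (mem s) (iota 1 m)].

Lemma nl_seq_coloring m s :
  nl_seq m s -> nl_coloring (@path_rel (size s)) m (fun i => nth 0 s i).
Proof.
case/and5P => s_gt1 uniq_keys proper_keys col_range col_onto.
have proper_u (u : 'I_(size s)) :
    proper_key (nkey (left_col s u) (nth 0 s u) (right_col s u)).
  by rewrite -nth_path_keys //; apply: (allP proper_keys); rewrite mem_nth ?size_path_keys.
split; [split; [split|] |].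
- by move=> x; apply: (allP col_range); apply: mem_nth.
- move=> c c_range; have s_c : c \in s by apply: (allP col_onto); rewrite mem_iota; lia.
  have lt_i : index c s < size s by rewrite index_mem.
  by exists (Ordinal lt_i); rewrite /= nth_index.
- move=> u v /orP [] /eqP E; have := proper_u u;
    rewrite /proper_key /nkey /left_col /right_col /=.
    by rewrite E ltn_ord; lia.
  by rewrite -E /=; lia.
move=> u v neq_uv eq_col eq_nb; apply: neq_uv; apply: val_inj.
apply: (uniqP (0, 0, 0) uniq_keys); rewrite ?inE ?size_path_keys ?ltn_ord //.
have [Emin Emax] : minn (left_col s u) (right_col s u) = minn (left_col s v) (right_col s v)
    /\ maxn (left_col s u) (right_col s u) = maxn (left_col s v) (right_col s v).
  have nb := mem_nbcols_path (f := fun i : 'I_(size s) => nth 0 s i) _ _ erefl s_gt1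
    (fun i => erefl).
  by apply/eq_pair_mem => z; rewrite -!nb; apply: eq_nb.
rewrite !nth_path_keys ?ltn_ord // /nkey.
by congr (_, _, _); [exact: eq_col | exact: Emin | exact: Emax].
Qed.

Definition capacity (k : nat) := k * 'C(k, 2).

Lemma double_bin2 k : 'C(k, 2).*2 = k * k.-1.
Proof. by elim: k => [|k IH] //; rewrite binS bin1 doubleD IH; case: k {IH} => //= k; nia. Qed.

Lemma capacityE k : (k ^ 3 - k ^ 2) %/ 2 = capacity k.
Proof.
have := double_bin2 k; rewrite /capacity !expnS expn0 => dbl.
by rewrite (_ : _ - _ = capacity k * 2) ?mulnK // /capacity; case: k dbl => //= k; nia.
Qed.

Definition level_size (k : nat) := 3 * 'C(k, 2) + 2 * k.

Lemma capacityS k : capacity k.+1 = capacity k + level_size k.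
Proof.
have := double_bin2 k; rewrite /capacity /level_size binS bin1.
by case: k => //= k; nia.
Qed.

Definition skip c a := if a < c then a else a.+1.

(* All keys [(c, lo, hi)] with [lo <= hi], [c] different from [lo] and [hi], over [k]
   colours: the pair [(lo, hi)] is obtained by skipping [c] in a pair over [k - 1]. *)
Definition admissible_keys k :=
  [seq (c, skip c ab.1, skip c ab.2) | c <- iota 1 k,
                                       ab <- [seq (a, b) | b <- iota 1 k.-1, a <- iota 1 b]].

Lemma sumn_iota a n : sumn (iota a n) = a * n + 'C(n, 2).
Proof. by elim: n a => [|n IH] a; rewrite ?muln0 //= IH binS bin1; lia. Qed.

Lemma size_admissible_keys k : size (admissible_keys k) = capacity k.
Proof.
rewrite /admissible_keys size_allpairs size_iota size_allpairs_dep.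
rewrite (eq_map (fun b => size_iota 1 b)) map_id sumn_iota mul1n /capacity.
by case: k => [|k] //=; rewrite binS bin1 addnC.
Qed.

Lemma mem_admissible_keys k c lo hi :
  0 < c <= k -> 0 < lo <= hi -> hi <= k -> lo != c -> hi != c ->
  (c, lo, hi) \in admissible_keys k.
Proof.
move=> c_range lo_range hi_le neq_lo neq_hi.
pose unskip a := if a < c then a else a.-1.
have skipK a : 0 < a -> a != c -> skip c (unskip a) = a.
  move=> a_gt0 neq_a; rewrite /skip /unskip.
  by case: (ltnP a c) => [lt_ac | le_ca] /=; [rewrite lt_ac | rewrite ifF; lia].
apply/allpairsP; exists (c, (unskip lo, unskip hi)); split => /=.
- by rewrite mem_iota; lia.
- by apply/allpairsPdep; exists (unskip hi), (unskip lo); rewrite !mem_iota /unskip;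
    split => //; repeat case: ifP => ?; lia.
- by rewrite !skipK //; lia.
Qed.

Lemma nl_path_le_capacity n k (f : 'I_n -> nat) :
  1 < n -> nl_coloring (@path_rel n) k f -> n <= capacity k.
Proof.
case: n f => [|n] f // n_gt1 [[[col_range _] col_proper] col_locating].
pose s := mkseq (fun i => f (inord i)) n.+1.
have size_s : size s = n.+1 by rewrite size_mkseq.
have Ef (i : 'I_n.+1) : f i = nth 0 s i by rewrite nth_mkseq ?inord_val.
have nb := mem_nbcols_path _ _ size_s n_gt1 Ef.
rewrite -size_admissible_keys -{1}size_s -size_path_keys.
apply: uniq_leq_size.
- apply/(uniqP (0, 0, 0)) => i j; rewrite !inE size_path_keys size_s => lt_i lt_j.
  rewrite !nth_path_keys ?size_s // /nkey => [[eq_col eq_min eq_max]].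
  case: (eqVneq (Ordinal lt_i) (Ordinal lt_j)) => [[] // | /eqP neq_ij].
  exfalso; apply: (col_locating _ _ neq_ij); first by rewrite !Ef.
  have eq_nb := proj2 (eq_pair_mem _ _ _ _) (conj eq_min eq_max).
  by move=> c; rewrite !nb /=; apply: eq_nb.
move=> key /(nthP (0, 0, 0)) [i]; rewrite size_path_keys size_s => lt_i <-.
rewrite nth_path_keys ?size_s //.
have nb_ok z : z \in nbcols (@path_rel n.+1) f (Ordinal lt_i) -> 0 < z <= k /\ z != nth 0 s i.
  case/mapP => w; rewrite mem_filter => /andP [u_w _] ->; split; first exact: col_range.
  by apply/eqP => E; apply: (col_proper _ _ u_w); rewrite E Ef.
have [l_range l_neq] : 0 < left_col s i <= k /\ left_col s i != nth 0 s i.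
  by apply: nb_ok; rewrite nb eqxx.
have [r_range r_neq] : 0 < right_col s i <= k /\ right_col s i != nth 0 s i.
  by apply: nb_ok; rewrite nb eqxx orbT.
have := col_range (Ordinal lt_i); rewrite Ef /= => c_range.
by rewrite /nkey; apply: mem_admissible_keys; lia.
Qed.

Arguments inner_keys : simpl never.

Definition excursions (x : nat) (os : seq (seq nat)) :=
  x :: flatten [seq o ++ [:: x] | o <- os].

Fixpoint exit_col (p : nat) (os : seq (seq nat)) :=
  if os is o :: os' then exit_col (last p o) os' else p.

Fixpoint excursion_keys x p (os : seq (seq nat)) :=
  if os is o :: os' then inner_keys (p :: x :: o ++ [:: x]) ++ excursion_keys x (last p o) os'
  else [::].

Lemma mem_excursions x os c :
  (c \in excursions x os) = (c == x) || has (fun o => c \in o) os.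
Proof.
rewrite inE; elim: os => [|o os IH] /=; first by rewrite orbF.
by rewrite !mem_cat inE; case: (c == x) IH; rewrite //= orbF => ->.
Qed.

Lemma inner_keys_excursions x p os l : all (fun o => o != [::]) os ->
  inner_keys (p :: x :: flatten [seq o ++ [:: x] | o <- os] ++ l) =
  excursion_keys x p os ++ inner_keys (exit_col p os :: x :: l).
Proof.
elim: os p => [|o os IH] p //= /andP [o_ne os_ne].
case/lastP: o o_ne => [|o a] // _.
by rewrite -cats1 -!catA -!cat_cons (inner_keys_cat (p :: x :: o)) IH // last_cat.
Qed.

(* The keys created by appending [x :: o1 ++ x :: ... ++ ok ++ [:: x; 2; 1]] after a
   sequence ending in [2; 1]; the last one, [nkey 2 1 2], replaces the old end key. *)
Definition level_keys x os :=
  nkey 2 1 x :: excursion_keys x 1 os ++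
  [:: nkey (exit_col 1 os) x 2; nkey x 2 1; nkey 2 1 2].

Lemma inner_keys_level x os : all (fun o => o != [::]) os ->
  inner_keys (2 :: 1 :: excursions x os ++ [:: 2; 1; 2]) = level_keys x os.
Proof.
move=> os_ne; rewrite /excursions cat_cons inner_keys_cons //= -/(inner_keys _).
by rewrite inner_keys_excursions.
Qed.

Lemma path_keys_end21 P : path_keys (P ++ [:: 2; 1]) =
  inner_keys (nth 0 (P ++ [:: 2; 1]) 1 :: P ++ [:: 2; 1]) ++ [:: nkey 2 1 2].
Proof.
rewrite /path_keys /pad size_cat addn2 /= [nth 0 _ (size P)]nth_cat ltnn subnn /=.
by rewrite -catA /= -cat_cons inner_keys_cat.
Qed.

Lemma path_keys_extend P x os :
  path_keys (P ++ [:: 2; 1] ++ excursions x os ++ [:: 2; 1]) =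
  inner_keys (nth 0 (P ++ [:: 2; 1]) 1 :: P ++ [:: 2; 1]) ++
  inner_keys (2 :: 1 :: excursions x os ++ [:: 2; 1; 2]).
Proof.
rewrite /path_keys /pad.
have -> : nth 0 (P ++ [:: 2; 1] ++ excursions x os ++ [:: 2; 1]) 1 = nth 0 (P ++ [:: 2; 1]) 1.
  by rewrite catA (nth_cat _ (P ++ _)) size_cat addn2.
have -> : nth 0 (P ++ [:: 2; 1] ++ excursions x os ++ [:: 2; 1])
            (size (P ++ [:: 2; 1] ++ excursions x os ++ [:: 2; 1])).-2 = 2.
  by rewrite !catA nth_cat !size_cat addn2 /= ltnn subnn.
by rewrite -!catA /= -cat_cons inner_keys_cat.
Qed.

Definition has_col x (k : nat * nat * nat) := [|| k.1.1 == x, k.1.2 == x | k.2 == x].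

Lemma inner_keys_bounded m l k : all (fun c => c <= m) l -> k \in inner_keys l ->
  ~~ has_col m.+1 k.
Proof.
move=> /allP l_le; case: k => [[a b] c] /mem_inner_keys /= [/l_le a_le /l_le b_le /l_le c_le].
by rewrite /has_col /=; lia.
Qed.

Lemma colors_extend m P os : 1 < m ->
    all (fun c => 0 < c <= m) (P ++ [:: 2; 1]) -> {subset iota 1 m <= P ++ [:: 2; 1]} ->
    all (fun o => all (fun a => 0 < a <= m) o) os ->
  let s := P ++ [:: 2; 1] ++ excursions m.+1 os ++ [:: 2; 1] in
  all (fun c => 0 < c <= m.+1) s /\ {subset iota 1 m.+1 <= s}.
Proof.
move=> m_gt1 range_old onto_old os_range; split.
  rewrite catA; apply/allP => c; rewrite mem_cat => /orP [old | ].
    by case/andP: (allP range_old c old) => -> /leqW.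
  rewrite mem_cat mem_excursions => /orP [/orP [/eqP -> | ] | ]; first by rewrite leqnn.
    by case/hasP => o /(allP os_range) o_range /(allP o_range) /andP [-> /leqW].
  by rewrite !inE => /orP [] /eqP -> //=; rewrite ltnW.
move=> c; rewrite mem_iota catA mem_cat => /andP [c_gt0 c_lt].
case: (eqVneq c m.+1) => [-> | neq_c]; first by rewrite mem_cat mem_head orbT.
by rewrite onto_old // mem_iota c_gt0 add1n ltn_neqAle neq_c -ltnS.
Qed.

Lemma nl_seq_extend m P os :
  nl_seq m (P ++ [:: 2; 1]) ->
  all (fun o => o != [::]) os ->
  all (fun o => all (fun a => 0 < a <= m) o) os ->
  uniq (level_keys m.+1 os) -> all proper_key (level_keys m.+1 os) ->
  (forall k, k \in level_keys m.+1 os -> (k == nkey 2 1 2) || has_col m.+1 k) ->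
  nl_seq m.+1 (P ++ [:: 2; 1] ++ excursions m.+1 os ++ [:: 2; 1]).
Proof.
case/and5P => _ uniq_old proper_old range_old onto_old os_ne os_range uniq_lv proper_lv lv_new.
have m_gt1 : 1 < m.
  have : 2 \in P ++ [:: 2; 1] by rewrite mem_cat !inE eqxx orbT.
  by move/(allP range_old) => /andP [].
have [range_new onto_new] := colors_extend m_gt1 range_old (allP onto_old) os_range.
rewrite path_keys_end21 in uniq_old proper_old.
rewrite cat_uniq /= andbT orbF in uniq_old; case/andP: uniq_old => uniq_A old_end.
set A := inner_keys _ in uniq_A old_end proper_old.
have A_old k : k \in A -> ~~ has_col m.+1 k.
  apply: inner_keys_bounded; apply/allP => z /predU1P [-> | /(allP range_old) /andP [] //].
  have : nth 0 (P ++ [:: 2; 1]) 1 \in P ++ [:: 2; 1] by rewrite mem_nth // size_cat addn2.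
  by move/(allP range_old) => /andP [].
rewrite /nl_seq range_new path_keys_extend inner_keys_level // -/A cat_uniq all_cat uniq_A.
rewrite uniq_lv proper_lv !andbT andTb; apply/and4P; split.
- by rewrite !size_cat /= !addnS.
- apply/hasPn => k /lv_new /orP [/eqP -> // | new_k].
  by apply/negP => /A_old; rewrite new_k.
- by move: proper_old; rewrite all_cat => /andP [].
by apply/allP.
Qed.

Lemma nkey_le a b c : a <= c -> nkey a b c = (b, a, c).
Proof. by move=> le_ac; rewrite /nkey (minn_idPl le_ac) (maxn_idPr le_ac). Qed.

Lemma nkey_ge a b c : c <= a -> nkey a b c = (b, c, a).
Proof. by move=> le_ca; rewrite /nkey (minn_idPr le_ca) (maxn_idPl le_ca). Qed.

Lemma excursion_keys_cat x p os1 os2 :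
  excursion_keys x p (os1 ++ os2) =
  excursion_keys x p os1 ++ excursion_keys x (exit_col p os1) os2.
Proof. by elim: os1 p => [|o os IH] p //=; rewrite IH catA. Qed.

Lemma exit_col_cat p os1 os2 : exit_col p (os1 ++ os2) = exit_col (exit_col p os1) os2.
Proof. by elim: os1 p => [|o os IH] p //=. Qed.

(* Keys of the excursions [x, y, a, x] for [a] in [l], entered from colour [p]. *)
Fixpoint pair_keys x y p (l : seq nat) :=
  if l is a :: l' then nkey p x y :: nkey x y a :: nkey y a x :: pair_keys x y a l' else [::].

Lemma excursion_keys_pairs x y p l :
  excursion_keys x p [seq [:: y; a] | a <- l] = pair_keys x y p l.
Proof. by elim: l p => [|a l IH] p //=; rewrite IH. Qed.

Lemma exit_col_pairs y p l : exit_col p [seq [:: y; a] | a <- l] = last p l.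
Proof. by elim: l p => [|a l IH] p //=. Qed.

Definition pair_shape x y p l (k : nat * nat * nat) :=
  [|| (k.1.1 == x) && (k.2 == y) && (k.1.2 \in belast p l),
      (k.1.1 == y) && (k.2 == x) && (k.1.2 \in l) |
      (k.1.2 == y) && (k.2 == x) && (k.1.1 \in l)].

Lemma pair_keys_ok x y p l : y < x -> p <= y -> uniq (belast p l) -> uniq l ->
    all (fun a => 0 < a < y) l ->
  uniq (pair_keys x y p l) /\ forall k, k \in pair_keys x y p l -> pair_shape x y p l k.
Proof.
elim: l p => [|a l IH] p // lt_yx le_py /andP [p_notin uniq_pl] /andP [a_notin uniq_l].
case/andP => /andP [a_gt0 lt_ay] l_range.
have [uniq_rest shape_rest] := IH a lt_yx (ltnW lt_ay) uniq_pl uniq_l l_range.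
rewrite /= (nkey_le x le_py) (nkey_ge y (ltnW (ltn_trans lt_ay lt_yx))) (nkey_le a (ltnW lt_yx)).
split.
  rewrite /= uniq_rest andbT !inE; apply/and3P; split.
  - apply/negP => /or3P [ | | /shape_rest]; rewrite ?xpair_eqE; try lia.
    by rewrite /pair_shape /= (negbTE p_notin); lia.
  - apply/negP => /orP [ | /shape_rest]; rewrite ?xpair_eqE; try lia.
    by rewrite /pair_shape /= (negbTE a_notin); lia.
  - by apply/negP => /shape_rest; rewrite /pair_shape /= (negbTE a_notin); lia.
move=> k; rewrite !inE => /or4P [/eqP -> | /eqP -> | /eqP -> | /shape_rest].
- by rewrite /pair_shape /= !inE ?eqxx ?orbT.
- by rewrite /pair_shape /= !inE ?eqxx ?orbT.
- by rewrite /pair_shape /= !inE ?eqxx ?orbT.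
by rewrite /pair_shape /= !inE => /or3P [/andP [-> ->] | /andP [-> ->] | /andP [-> ->]];
  rewrite ?orbT.
Qed.

(* [block_of x k] recovers [y] from every key created by the excursions of the
   block of [y]; these are exactly the new keys containing a colour of [(2, x)]. *)
Definition block_of x (k : nat * nat * nat) :=
  if k.1.1 == x then k.2 else if k.1.2 == x then k.1.1 else maxn k.1.1 k.1.2.

Definition has_mid_col x (k : nat * nat * nat) :=
  [|| 2 < k.1.1 < x, 2 < k.1.2 < x | 2 < k.2 < x].

Definition block_key x y k :=
  [&& block_of x k == y, has_col x k, proper_key k & has_mid_col x k].

Lemma pair_key_block x y p l k : y < x -> 2 < y -> p <= y -> all (fun a => 0 < a < y) l ->
  pair_shape x y p l k -> block_key x y k.
Proof.
move=> lt_yx gt_y2 le_py l_range; case: k => [[c d] e].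
rewrite /pair_shape /block_key /block_of /has_col /proper_key /has_mid_col /=.
case/or3P => /andP [/andP [/eqP -> /eqP ->] in_l].
- have le_dy : d <= y.
    by case/predU1P: (mem_belast in_l) => [-> // | /(allP l_range) /andP [_ /ltnW]].
  by rewrite !eqxx /=; lia.
- have /andP [d_gt0 lt_dy] := allP l_range _ in_l.
  by rewrite !ifF; lia.
- have /andP [c_gt0 lt_cy] := allP l_range _ in_l.
  by rewrite !ifF; lia.
Qed.

(* The excursions of the block of [y]: [[y]] when [y <= v], then [[y; a]] for
   [a = 2, ..., j] and finally [a = 1], so that the block is left through colour 1. *)
Definition block (v y j : nat) : seq (seq nat) :=
  (if y <= v then [:: [:: y]] else [::]) ++ [seq [:: y; a] | a <- rcons (iota 2 j.-1) 1].

Lemma exit_col_block p v y j : exit_col p (block v y j) = 1.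
Proof. by rewrite /block exit_col_cat exit_col_pairs last_rcons. Qed.

Lemma block_keys_ok x v y j : y < x -> 2 < y -> 0 < j < y ->
  uniq (excursion_keys x 1 (block v y j)) /\
  forall k, k \in excursion_keys x 1 (block v y j) -> block_key x y k.
Proof.
move=> lt_yx gt_y2 j_range.
set l := rcons (iota 2 j.-1) 1.
have l_range : all (fun a => 0 < a < y) l.
  by apply/allP => a; rewrite mem_rcons inE mem_iota => /orP [/eqP -> | ]; lia.
have uniq_l : uniq l by rewrite rcons_uniq iota_uniq mem_iota andbT; lia.
have uniq_pl p : p \notin iota 2 j.-1 -> uniq (belast p l).
  by move=> p_notin; rewrite belast_rcons /= iota_uniq p_notin.
rewrite /block excursion_keys_cat excursion_keys_pairs.
case: (leqP y v) => [le_yv | _] /=; last first.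
  have [uniq_ks shape_ks] : uniq (pair_keys x y 1 l) /\ forall k, k \in pair_keys x y 1 l ->
      pair_shape x y 1 l k.
    by apply: pair_keys_ok => //; [lia | apply: uniq_pl; rewrite mem_iota].
  by split=> // k /shape_ks; apply: pair_key_block => //; lia.
have [uniq_ks shape_ks] : uniq (pair_keys x y y l) /\ forall k, k \in pair_keys x y y l ->
    pair_shape x y y l k.
  by apply: pair_keys_ok => //; apply: uniq_pl; rewrite mem_iota; lia.
rewrite (nkey_le x (ltnW (ltnW gt_y2))) (nkey_le y (leqnn x)).
split.
  rewrite /= uniq_ks andbT !inE !xpair_eqE negb_or -andbA; apply/and3P; split; try lia.
    apply/negP => /shape_ks.
    by rewrite /pair_shape /= belast_rcons !inE mem_rcons !inE !mem_iota; lia.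
  by apply/negP => /shape_ks; rewrite /pair_shape /= mem_rcons !inE !mem_iota; lia.
move=> k; rewrite !inE => /or3P [/eqP -> | /eqP -> | /shape_ks]; last exact: pair_key_block.
  by rewrite /block_key /block_of /has_col /proper_key /has_mid_col /= !eqxx /=; lia.
by rewrite /block_key /block_of /has_col /proper_key /has_mid_col /= ifF ?eqxx /=; lia.
Qed.

Lemma excursion_keys_blocks x v g ys :
  excursion_keys x 1 (flatten [seq block v y (g y) | y <- ys]) =
  flatten [seq excursion_keys x 1 (block v y (g y)) | y <- ys].
Proof. by elim: ys => [|y ys IH] //=; rewrite excursion_keys_cat exit_col_block IH. Qed.

Lemma exit_col_blocks v g ys : exit_col 1 (flatten [seq block v y (g y) | y <- ys]) = 1.
Proof. by elim: ys => [|y ys IH] //=; rewrite exit_col_cat exit_col_block IH. Qed.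

Lemma blocks_keys_ok x v (g : nat -> nat) ys :
    (forall y, y \in ys -> 2 < y < x /\ 0 < g y < y) -> uniq ys ->
  let ks := flatten [seq excursion_keys x 1 (block v y (g y)) | y <- ys] in
  uniq ks /\ forall k, k \in ks -> [&& block_of x k \in ys, has_col x k, proper_key k
                                     & has_mid_col x k].
Proof.
elim: ys => [|y ys IH] //= ys_range /andP [y_notin uniq_ys].
have [uniq_rest ok_rest] :=
  IH (fun z z_in => ys_range z (mem_behead (s := y :: ys) z_in)) uniq_ys.
have [/andP [gt_y2 lt_yx] g_range] := ys_range y (mem_head _ _).
have [uniq_blk ok_blk] := block_keys_ok v lt_yx gt_y2 g_range.
split.
  rewrite cat_uniq uniq_blk uniq_rest andbT /=; apply/hasPn => k /ok_rest /and4P [k_ys _ _ _].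
  by apply/negP => /ok_blk /and4P [/eqP k_y _ _ _]; rewrite k_y (negbTE y_notin) in k_ys.
move=> k; rewrite mem_cat => /orP [/ok_blk /and4P [/eqP -> -> -> ->] | ].
  by rewrite mem_head.
by case/ok_rest/and4P => k_ys -> -> ->; rewrite inE k_ys orbT.
Qed.

Definition block_len (Y j y : nat) := if y < Y then y.-1 else j.

(* Blocks of [y] for [3 <= y <= Y], complete for [y < Y] and with [j] pair
   excursions for [y = Y], plus the singleton excursions [[c]] for every [c <= v]. *)
Definition plan (Y j v : nat) : seq (seq nat) :=
  (if 0 < v then [:: [:: 1]] else [::]) ++
  flatten [seq block v y (block_len Y j y) | y <- iota 3 (Y - 2)] ++
  (if 1 < v then [:: [:: 2]] else [::]).

Definition plan_ok m Y j v := [&& 1 < Y, Y <= m, 0 < j, j < Y & v <= Y].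

(* The new keys not created inside a block. *)
Definition outer_keys x b1 b2 :=
  nkey 2 1 x :: (if b1 then [:: nkey 1 x 1; nkey x 1 x] else [::]) ++
  (if b2 then [:: nkey 1 x 2; nkey x 2 x] else [::]) ++
  [:: nkey (if b2 then 2 else 1) x 2; nkey x 2 1; nkey 2 1 2].

Lemma outer_keys_ok x b1 b2 : 2 < x ->
  uniq (outer_keys x b1 b2) /\
  all (fun k => [&& ~~ has_mid_col x k, proper_key k & (k == nkey 2 1 2) || has_col x k])
    (outer_keys x b1 b2).
Proof.
case: x => [|[|[|x]]] // _; rewrite /outer_keys /nkey ?minnn ?maxnn.
by case: b1; case: b2; split;
  rewrite /= ?inE /has_mid_col /proper_key /has_col /= ?minnn ?maxnn ?xpair_eqE /= ?ltnn
    ?eqxx ?andbF ?orbF.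
Qed.

Lemma level_keys_plan x Y j v :
  perm_eq (level_keys x (plan Y j v))
    (outer_keys x (0 < v) (1 < v) ++
     flatten [seq excursion_keys x 1 (block v y (block_len Y j y)) | y <- iota 3 (Y - 2)]).
Proof.
have exit1 : exit_col 1 (if 0 < v then [:: [:: 1]] else [::]) = 1 by case: (0 < v).
rewrite /level_keys /plan !excursion_keys_cat !exit_col_cat exit1 exit_col_blocks.
rewrite excursion_keys_blocks /outer_keys /= perm_cons -!catA.
by case: (0 < v); case: (1 < v); rewrite /= ?perm_cons perm_catC.
Qed.

Lemma plan_blocks_range m Y j v : plan_ok m Y j v ->
  forall y, y \in iota 3 (Y - 2) -> 2 < y < m.+1 /\ 0 < block_len Y j y < y.
Proof.
move=> /and5P [? ? ? ? _] y; rewrite mem_iota /block_len => y_range.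
by case: ifP => ?; lia.
Qed.

Lemma plan_nonempty Y j v : all (fun o => o != [::]) (plan Y j v).
Proof.
apply/allP => o; rewrite /plan !mem_cat => /or3P [ | | ].
- by case: (0 < v); rewrite ?inE // => /eqP ->.
- case/flattenP => b /mapP [y _ ->]; rewrite /block mem_cat => /orP [ | /mapP [a _ ->]] //.
  by case: (y <= v); rewrite ?inE // => /eqP ->.
- by case: (1 < v); rewrite ?inE // => /eqP ->.
Qed.

Lemma plan_range m Y j v : 1 < m -> plan_ok m Y j v ->
  all (fun o => all (fun a => 0 < a <= m) o) (plan Y j v).
Proof.
move=> m_gt1 ok; have blocks_range := plan_blocks_range ok.
apply/allP => o; rewrite /plan !mem_cat => /or3P [ | | ].
- by case: (0 < v); rewrite ?inE // => /eqP -> /=; rewrite andbT; lia.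
- case/flattenP => b /mapP [y /blocks_range [y_range len_range] ->].
  rewrite /block mem_cat => /orP [ | /mapP [a a_in ->]].
    by case: (y <= v); rewrite ?inE // => /eqP -> /=; rewrite andbT; lia.
  by move: a_in; rewrite mem_rcons inE mem_iota /= andbT; lia.
- by case: (1 < v); rewrite ?inE // => /eqP -> /=; rewrite andbT; lia.
Qed.

Lemma plan_keys_ok m Y j v : 1 < m -> plan_ok m Y j v ->
  [/\ uniq (level_keys m.+1 (plan Y j v)), all proper_key (level_keys m.+1 (plan Y j v)) &
      forall k, k \in level_keys m.+1 (plan Y j v) -> (k == nkey 2 1 2) || has_col m.+1 k].
Proof.
move=> m_gt1 ok; have perm_lv := level_keys_plan m.+1 Y j v.
have [uniq_blk ok_blk] := blocks_keys_ok v (plan_blocks_range ok) (iota_uniq 3 (Y - 2)).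
have [uniq_out ok_out] := outer_keys_ok (0 < v) (1 < v) (m_gt1 : 2 < m.+1).
split.
- rewrite (perm_uniq perm_lv) cat_uniq uniq_out uniq_blk andbT /=.
  apply/hasPn => k /ok_blk /and4P [_ _ _ mid_k].
  by apply/negP => /(allP ok_out) /and3P [/negP].
- rewrite (perm_all _ perm_lv) all_cat; apply/andP; split.
    by apply: sub_all ok_out => k /and3P [].
  by apply/allP => k /ok_blk /and4P [].
move=> k; rewrite (perm_mem perm_lv) mem_cat => /orP [/(allP ok_out) /and3P [] // | ].
by case/ok_blk/and4P => _ -> _ _; rewrite orbT.
Qed.

Definition excursion_len (os : seq (seq nat)) := sumn [seq (size o).+1 | o <- os].

Lemma size_excursions x os : size (excursions x os) = (excursion_len os).+1.
Proof.
rewrite /excursions /= size_flatten /shape -map_comp /excursion_len.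
by congr (sumn _).+1; apply: eq_map => o /=; rewrite size_cat addn1.
Qed.

Lemma excursion_len_cat os1 os2 :
  excursion_len (os1 ++ os2) = excursion_len os1 + excursion_len os2.
Proof. by rewrite /excursion_len map_cat sumn_cat. Qed.

Lemma excursion_len_block v y j : 0 < j ->
  excursion_len (block v y j) = 2 * (y <= v) + 3 * j.
Proof.
move=> j_gt0; rewrite /block excursion_len_cat; congr (_ + _); first by case: (y <= v).
have sum3 (l : seq nat) : sumn [seq 3 | _ <- l] = 3 * size l.
  by elim: l => [|a l IH] //=; rewrite IH mulnS.
rewrite /excursion_len -map_comp (eq_map (g := fun=> 3)) //.
by rewrite sum3 size_rcons size_iota prednK.
Qed.

Lemma excursion_len_blocks v (g : nat -> nat) ys : (forall y, y \in ys -> 0 < g y) ->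
  excursion_len (flatten [seq block v y (g y) | y <- ys]) =
  2 * count (fun y => y <= v) ys + 3 * sumn [seq g y | y <- ys].
Proof.
elim: ys => [|y ys IH] g_gt0 //=.
rewrite excursion_len_cat excursion_len_block ?g_gt0 ?mem_head // IH; last first.
  by move=> z z_in; apply: g_gt0; rewrite inE z_in orbT.
by rewrite !mulnDr addnACA.
Qed.

Lemma count_leq_iota v a n : count (fun y => y <= v) (iota a n) = minn (v.+1 - a) n.
Proof. by elim: n a => [|n IH] a /=; rewrite ?minn0 // IH; case: leqP; lia. Qed.

Definition npairs Y j := 'C(Y.-1, 2) + j.-1.

Lemma sumn_block_len Y j : 1 < Y -> 0 < j < Y ->
  sumn [seq block_len Y j y | y <- iota 3 (Y - 2)] = npairs Y j.
Proof.
rewrite /npairs; case: Y => [|[|[|Y]]] // _ j_range; first by case: j j_range => [|[|]].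
have sum_pred n : sumn [seq y.-1 | y <- iota 3 n] = 'C(n.+2, 2) - 1.
  elim: n => [|n IH] //; rewrite -[n.+1]addn1 iotaD map_cat sumn_cat addn1 IH /=.
  by rewrite !binS !bin0 !bin1; lia.
rewrite (_ : Y.+3 - 2 = Y + 1) ?iotaD ?map_cat ?sumn_cat; last by lia.
rewrite (@eq_in_map _ _ (block_len Y.+3 j) predn (iota 3 Y)).1; last first.
  by move=> y; rewrite mem_iota /block_len => y_range; rewrite ifT //; lia.
by rewrite sum_pred /= /block_len ltnn addn0 !binS bin0 bin1; lia.
Qed.

Lemma excursion_len_plan m Y j v : plan_ok m Y j v ->
  excursion_len (plan Y j v) = 3 * npairs Y j + 2 * v.
Proof.
case/and5P => Y_gt1 _ j_gt0 lt_jY le_vY.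
rewrite /plan !excursion_len_cat excursion_len_blocks; last first.
  by move=> y; rewrite mem_iota /block_len; case: ifP; lia.
rewrite count_leq_iota sumn_block_len ?j_gt0 //.
by case: (ltnP 0 v) => ?; case: (ltnP 1 v) => ?; rewrite /excursion_len /=; lia.
Qed.

Lemma npairs_onto m e : 1 < m -> 0 < e <= 'C(m, 2) ->
  exists Y j, [&& 1 < Y, Y <= m, 0 < j & j < Y] /\ e = (npairs Y j).+1.
Proof.
elim: m e => [|m IH] e // m_gt0 e_range.
case: (leqP e 'C(m, 2)) => [le_e | lt_e].
  have m_gt1 : 1 < m.
    by rewrite ltnNge; apply/negP => le_m1; rewrite bin_small in le_e; lia.
  have [|Y [j [/and4P [? ? ? ?] ->]]] := IH e m_gt1; first by lia.
  by exists Y, j; split => //; apply/and4P; split => //; lia.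
move: e_range; rewrite binS bin1 => e_range.
exists m.+1, (e - 'C(m, 2)); rewrite /npairs /=; split; first by apply/and4P; split; lia.
lia.
Qed.

(* The number of vertices a plan adds: 3 for the first [x] and the final [2, 1], then 3
   per pair excursion and 2 per singleton excursion. *)
Definition realizable m c :=
  exists Y j v, plan_ok m Y j v /\ c = 3 * (npairs Y j).+1 + 2 * v.

(* Write [c = 3 e + 2 v] with [v = 2 c mod 3]; then [e] counts the pair excursions. *)
Lemma realizable_small m c : 1 < m -> (c == 3) || (5 <= c) -> c <= 3 * 'C(m, 2) ->
  realizable m c.
Proof.
move=> m_gt1 c_ge c_le.
have [|Y [j [/and4P [? ? ? ?] e_eq]]] := @npairs_onto m ((c - 2 * ((2 * c) %% 3)) %/ 3) m_gt1.
  by lia.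
by exists Y, j, ((2 * c) %% 3); split; [apply/and5P; split | rewrite -e_eq]; lia.
Qed.

(* For the last [2 m] values use [Y = m], with [j = m - 1] or [j = m - 2] according to
   the parity of [c]. *)
Lemma realizable_large m c : 2 < m -> 3 * 'C(m, 2) < c <= level_size m ->
  c != level_size m - 1 -> realizable m c.
Proof.
rewrite /level_size => m_gt2 c_range c_neq.
have bin_m : 'C(m, 2) = 'C(m.-1, 2) + m.-1.
  by rewrite -{1}(prednK (ltnW (ltnW m_gt2))) binS bin1 addnC.
pose r := c - 3 * 'C(m, 2).
exists m, (m.-1 - r %% 2), ((r + 3 * (r %% 2)) %/ 2); rewrite /npairs.
by split; [apply/and5P; split | ]; lia.
Qed.

Lemma last_excursions d x os : last d (excursions x os) = x.
Proof.
elim/last_ind: os => [|os o IH] //.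
by rewrite /excursions /= map_rcons flatten_rcons last_cat last_cat.
Qed.

Lemma extend_realizable m P c : 1 < m -> nl_seq m (P ++ [:: 2; 1]) -> realizable m c ->
  exists Q, [/\ size Q = size P + c, nl_seq m.+1 (Q ++ [:: 2; 1]),
              nth 0 Q (size Q).-1 = m.+1 & take 2 (Q ++ [:: 2; 1]) = take 2 (P ++ [:: 2; 1])].
Proof.
move=> m_gt1 nl_P [Y [j [v [ok ->]]]].
have [uniq_lv proper_lv new_lv] := plan_keys_ok m_gt1 ok.
exists (P ++ [:: 2; 1] ++ excursions m.+1 (plan Y j v)); split.
- by rewrite !size_cat size_excursions (excursion_len_plan ok) /=; lia.
- rewrite -!catA; apply: nl_seq_extend => //; [exact: plan_nonempty | exact: plan_range].
- by rewrite nth_last !last_cat last_excursions.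
by rewrite -!catA catA takel_cat // size_cat addn2.
Qed.

Lemma level_size_ge m : 3 < m -> 15 <= level_size m.-1.
Proof.
move=> m_gt3; have m1_ge3 : 3 <= m.-1 by lia.
have := leq_trans (isT : 3 <= 'C(3, 2)) (leq_bin2l 2 m1_ge3).
by rewrite /level_size; lia.
Qed.

(* The previous level is cut at a length [L] such that the increment [n - L] avoids
   the values 1, 2, 4 and [level_size m - 1], which no plan realizes. *)
Lemma split_increment m n : 3 < m -> capacity m < n <= capacity m.+1 ->
  exists L, [/\ capacity m.-1 < L <= capacity m, L < n, realizable m (n - L)
              & (L = capacity m - 1 -> n = capacity m.+1 - 1)].
Proof.
move=> m_gt3 n_range.
have gap := level_size_ge m_gt3; have gapS := level_size_ge (ltnW m_gt3 : 3 < m.+1).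
have capE : capacity m = capacity m.-1 + level_size m.-1 by rewrite -capacityS prednK //; lia.
have capSE := capacityS m.
have C_ge := leq_trans (isT : 6 <= 'C(4, 2)) (leq_bin2l 2 m_gt3).
have small c : (c == 3) || (5 <= c <= 3 * 'C(m, 2)) -> realizable m c.
  by move=> c_ok; apply: realizable_small; lia.
have large c : 3 * 'C(m, 2) < c <= level_size m -> c != level_size m - 1 -> realizable m c.
  by move=> ? ?; apply: realizable_large => //; lia.
have D_eq : level_size m = 3 * 'C(m, 2) + 2 * m by [].
case: (eqVneq (n - capacity m) 1) => [c0_1 | c0_n1].
  by exists (capacity m - 2); split; [lia | lia | apply: small; lia | lia].
case: (eqVneq (n - capacity m) 2) => [c0_2 | c0_n2].
  by exists (capacity m - 3); split; [lia | lia | apply: small; lia | lia].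
case: (eqVneq (n - capacity m) 4) => [c0_4 | c0_n4].
  by exists (capacity m - 2); split; [lia | lia | apply: small; lia | lia].
case: (eqVneq (n - capacity m) (level_size m - 1)) => [c0_D | c0_nD].
  by exists (capacity m - 1); split; [lia | lia | apply: large; lia | lia].
exists (capacity m); split; [lia | lia | | lia].
case: (leqP (n - capacity m) (3 * 'C(m, 2))) => c0_le; first by apply: small; lia.
by apply: large; lia.
Qed.

Definition framed m s : bool :=
  [&& nl_seq m s, nth 0 s (size s - 3) == m, drop (size s - 2) s == [:: 2; 1]
    & (size s != capacity m - 1) ==> (take 2 s == [:: 2; 1])].

Definition level4_seqs : seq (seq nat) :=
  [:: [:: 2; 1; 3; 1; 3; 2; 1; 4; 2; 1];
  [:: 2; 1; 3; 2; 1; 4; 3; 1; 4; 2; 1];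
  [:: 2; 1; 3; 1; 3; 2; 3; 2; 1; 4; 2; 1];
  [:: 2; 1; 3; 1; 3; 2; 1; 4; 3; 1; 4; 2; 1];
  [:: 2; 1; 3; 1; 3; 2; 3; 2; 1; 4; 1; 4; 2; 1];
  [:: 2; 1; 3; 1; 3; 2; 3; 2; 1; 4; 3; 1; 4; 2; 1];
  [:: 2; 1; 3; 1; 3; 2; 3; 2; 1; 4; 1; 4; 2; 4; 2; 1];
  [:: 2; 1; 3; 1; 3; 2; 3; 2; 1; 4; 1; 4; 3; 1; 4; 2; 1];
  [:: 2; 1; 3; 1; 3; 2; 3; 2; 1; 4; 3; 2; 4; 3; 1; 4; 2; 1];
  [:: 2; 1; 3; 1; 3; 2; 3; 2; 1; 4; 1; 4; 3; 1; 4; 2; 4; 2; 1];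
  [:: 2; 1; 3; 1; 3; 2; 3; 2; 1; 4; 1; 4; 3; 2; 4; 3; 1; 4; 2; 1];
  [:: 2; 1; 3; 1; 3; 2; 3; 2; 1; 4; 1; 4; 3; 4; 3; 1; 4; 2; 4; 2; 1];
  [:: 2; 1; 3; 1; 3; 2; 3; 2; 1; 4; 1; 4; 3; 2; 4; 3; 1; 4; 2; 4; 2; 1];
  [:: 3; 2; 3; 1; 3; 1; 2; 1; 4; 1; 4; 3; 4; 3; 2; 4; 3; 1; 4; 2; 4; 2; 1];
  [:: 2; 1; 3; 1; 3; 2; 3; 2; 1; 4; 1; 4; 3; 4; 3; 2; 4; 3; 1; 4; 2; 4; 2; 1]].

Lemma level4_seqsP : all (framed 4) level4_seqs && (map size level4_seqs == iota 10 15).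
Proof. by vm_compute. Qed.

Lemma framed_extend m s c : 1 < m -> framed m s -> realizable m c ->
  exists s', [/\ size s' = size s + c, nl_seq m.+1 s', nth 0 s' (size s' - 3) = m.+1,
                drop (size s' - 2) s' = [:: 2; 1] & take 2 s' = take 2 s].
Proof.
move=> m_gt1 /and4P [nl_s _ /eqP end_s _] c_ok.
have s_gt1 : 1 < size s by case/and5P: nl_s.
have s_eq : s = take (size s - 2) s ++ [:: 2; 1] by rewrite -end_s cat_take_drop.
rewrite s_eq in nl_s; have [Q [size_Q nl_Q last_Q take_Q]] := extend_realizable m_gt1 nl_s c_ok.
exists (Q ++ [:: 2; 1]); rewrite size_cat addn2 /= -s_eq in take_Q *; split => //.
- by rewrite size_Q size_take; case: ltnP => ?; lia.
- have Q_gt0 : 0 < size Q by case: (Q) last_Q.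
  by rewrite nth_cat ifT (_ : _ - 3 = (size Q).-1) //; lia.
by rewrite (_ : _ - 2 = size Q) ?drop_size_cat //; lia.
Qed.

Lemma framed_levels m n : 3 < m -> capacity m.-1 < n <= capacity m ->
  exists s, size s = n /\ framed m s.
Proof.
elim: m n => [|m IH] // n m_gt3 n_range.
case: (ltnP m 4) => [lt_m4 | m_ge4].
  move: n_range; rewrite (_ : m = 3) /=; last by lia.
  rewrite (_ : capacity 3 = 9) // (_ : capacity 4 = 24) //.
  have /andP [/allP all_framed /eqP sizes] := level4_seqsP.
  move=> n_range; have lt_i : n - 10 < size level4_seqs.
    by rewrite -(size_map size) sizes size_iota; lia.
  exists (nth [::] level4_seqs (n - 10)); split; last exact/all_framed/mem_nth.
  by rewrite -(nth_map _ 0) // sizes nth_iota; lia.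
have [L [L_range lt_Ln c_ok L_last]] := split_increment m_ge4 n_range.
have [s [size_s framed_s]] := IH L m_ge4 L_range.
have m_gt1 : 1 < m by lia.
have [s' [size_s' nl_s' mid_s' end_s' take_s']] := framed_extend m_gt1 framed_s c_ok.
have {}size_s' : size s' = n by rewrite size_s' size_s; lia.
exists s'; split => //; apply/and4P; split => //; rewrite ?mid_s' ?end_s' //.
apply/implyP; rewrite take_s' size_s' => n_ne; case/and4P: framed_s => _ _ _ /implyP; apply.
by apply: contra n_ne; rewrite size_s => /eqP /L_last ->.
Qed.

Definition small_seqs : seq (seq nat) :=
  [:: [:: 2; 1]; [:: 3; 2; 1]; [:: 1; 3; 2; 1]; [:: 1; 3; 1; 2; 1]; [:: 1; 3; 2; 3; 2; 1];
      [:: 2; 1; 3; 1; 3; 2; 1]; [:: 3; 2; 3; 1; 3; 1; 2; 1]; [:: 2; 1; 3; 1; 3; 2; 3; 2; 1]].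

Lemma small_seqsP :
  all (fun s => [&& nl_seq (if size s <= 2 then 2 else 3) s, drop (size s - 2) s == [:: 2; 1]
                  & (size s == 9) ==> framed 3 s]) small_seqs
  && (map size small_seqs == iota 2 8).
Proof. by vm_compute. Qed.

Lemma small_levels n : 2 <= n <= 9 ->
  exists s, [/\ size s = n, nl_seq (if n <= 2 then 2 else 3) s, drop (n - 2) s = [:: 2; 1]
               & (n == 9) ==> framed 3 s].
Proof.
case/andP => n_ge2 n_le9; have /andP [/allP all_small /eqP sizes] := small_seqsP.
have lt_i : n - 2 < size small_seqs by rewrite -(size_map size) sizes size_iota; lia.
set s := nth [::] small_seqs (n - 2).
have size_s : size s = n by rewrite /s -(nth_map _ 0) // sizes nth_iota; lia.
have /and3P [] := all_small s (mem_nth _ lt_i); rewrite size_s => nl_s /eqP end_s frame_s.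
by exists s.
Qed.

Lemma nl_path_seq_exists n m : 2 <= n -> n <= capacity m ->
    (forall k, n <= capacity k -> m <= k) ->
  exists s, [/\ size s = n, nl_seq m s, drop (n - 2) s = [:: 2; 1] & (9 <= n -> framed m s)].
Proof.
move=> n_ge2 n_le m_min.
have m_gt1 : 1 < m by move: n_le; case: (m) => [|[|]] //; rewrite /capacity bin_small //; lia.
have lt_n : capacity m.-1 < n by rewrite ltnNge; apply/negP => /m_min; lia.
case: (ltnP m 4) => [lt_m4 | m_ge4]; last first.
  have [s [size_s framed_s]] := framed_levels m_ge4 (introT andP (conj lt_n n_le)).
  by exists s; case/and4P: (framed_s) => nl_s _ /eqP end_s _; rewrite -size_s; split.
have m_eq : m = if n <= 2 then 2 else 3.
  case: (m) lt_m4 m_gt1 lt_n n_le => [|[|[|[|]]]] //= _ _.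
    by rewrite (_ : capacity 1 = 0) // (_ : capacity 2 = 2) //; case: ifP; lia.
  by rewrite (_ : capacity 2 = 2) // (_ : capacity 3 = 9) //; case: ifP; lia.
have cap_le : capacity m <= 9 by case: (m) lt_m4 => [|[|[|[|]]]].
have [|s [size_s nl_s end_s frame_s]] := @small_levels n; first by rewrite n_ge2; lia.
exists s; rewrite m_eq; split => // n_ge9.
by rewrite ifF; [apply: (implyP frame_s); apply/eqP | ]; lia.
Qed.

Lemma end21_nth s : 1 < size s -> drop (size s - 2) s = [:: 2; 1] ->
  nth 0 s (size s - 2) = 2 /\ nth 0 s (size s - 1) = 1.
Proof.
move=> s_gt1 end_s; have := nth_drop (size s - 2) 0 s 0; have := nth_drop (size s - 2) 0 s 1.
by rewrite end_s addn0 (_ : _ + 1 = size s - 1) //; lia.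
Qed.

Theorem theorem2 (n m : nat) :
  2 <= n ->
  n <= (m ^ 3 - m ^ 2) %/ 2 ->
  (forall k, n <= (k ^ 3 - k ^ 2) %/ 2 -> m <= k) ->
  is_chiL2 (@path_rel n) m /\
  exists f : 'I_n -> nat,
    nl_coloring (@path_rel n) m f /\
    (forall i : 'I_n, val i = n - 2 -> f i = 2) /\
    (forall i : 'I_n, val i = n - 1 -> f i = 1) /\
    (9 <= n -> forall i : 'I_n, val i = n - 3 -> f i = m) /\
    (9 <= n -> n != (m ^ 3 - m ^ 2) %/ 2 - 1 ->
       (forall i : 'I_n, val i = 0 -> f i = 2) /\
       (forall i : 'I_n, val i = 1 -> f i = 1)).
Proof.
rewrite !capacityE => n_ge2 n_le m_min.
have m_min' k : n <= capacity k -> m <= k by rewrite -capacityE; apply: m_min.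
have [s [size_s nl_s end_s framed_s]] := nl_path_seq_exists n_ge2 n_le m_min'.
subst n; have [end2 end1] := end21_nth n_ge2 end_s.
have nl_f := nl_seq_coloring nl_s.
split.
  split; first by exists (fun i : 'I_(size s) => nth 0 s i).
  by move=> k f /(nl_path_le_capacity n_ge2) /m_min'.
exists (fun i : 'I_(size s) => nth 0 s i); split => //.
split; first by move=> i i_eq; rewrite -end2 -i_eq.
split; first by move=> i i_eq; rewrite -end1 -i_eq.
split; first by case/framed_s/and4P => _ /eqP mid_s _ _ i i_eq; rewrite -mid_s -i_eq.
case/framed_s/and4P => _ _ _ /implyP start_s /start_s /eqP take_s.
by split=> i ->; rewrite -(nth_take 0 (_ : _ < 2)) // take_s.
Qed.
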